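(* Let $\gamma_N>0$ with $\gamma_N\to0$, and for $a>0$ put $a_N=a\gamma_N$. For each $N$ let $P_{N,a_N}$ be the probability on sequences $(n_j)_{j\ge0}$ of nonnegative integers with $\sum_jn_j=N$ given by $P_{N,a_N}((n_j))\propto e^{-a_N\sum_jjn_j}$, and $\langle n_0\rangle_{N,a_N}$ the expectation of $n_0$. If $N\gamma_N/\ln N\to0$, then for every $a>0$, $\frac1N\langle n_0\rangle_{N,a_N}\to0$ (i.e. $T_c=0$: no Bose–Einstein condensation at any positive temperature). If $N\gamma_N/\ln N\to\infty$, then for every $a>0$, $\frac1N\langle n_0\rangle_{N,a_N}\to1$ (i.e. $T_c=\infty$ and complete Bose–Einstein condensation at all finite temperatures).
   Context: This is the canonical ensemble of $N$ noninteracting bosons in a one-dimensional harmonic trap of scaled frequency $\omega\gamma_N$ at inverse temperature $\beta$, with $a=\hbar\omega\beta$ (so $a>0$ corresponds to $0<T<\infty$). *)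

From mathcomp Require Import all_boot.
From Stdlib Require Import Reals.
From Coquelicot Require Import Coquelicot.

Set Implicit Arguments.
Unset Strict Implicit.
Unset Printing Implicit Defensive.

Open Scope R_scope.

(* An occupation sequence (n_j)_{j>=0} with sum_j n_j = N and energy
   E = sum_j j n_j = M necessarily has n_j = 0 for j > M and n_j <= N.
   Hence the configurations of energy M are exactly the tables
   c : {ffun 'I_(M+1) -> 'I_(N+1)} (c j = n_j for j <= M, n_j = 0 beyond)
   with total N and energy M. *)
Definition occ (N M : nat) := {ffun 'I_M.+1 -> 'I_N.+1}.

Definition total {N M : nat} (c : occ N M) : nat :=
  (\sum_(j < M.+1) (c j : nat))%N.

Definition energy {N M : nat} (c : occ N M) : nat :=
  (\sum_(j < M.+1) (j : nat) * (c j : nat))%N.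

Definition admissible {N M : nat} (c : occ N M) : bool :=
  (total c == N) && (energy c == M).

Definition weight {N M : nat} (a : R) (c : occ N M) : R :=
  exp (- (a * INR (energy c))).

Definition Z_shell (a : R) (N M : nat) : R :=
  \big[Rplus/0]_(c : occ N M | admissible c) weight a c.

Definition n0_shell (a : R) (N M : nat) : R :=
  \big[Rplus/0]_(c : occ N M | admissible c) (INR (c ord0 : nat) * weight a c).

(* Canonical partition function Z_{N,a} = sum over all configurations,
   grouped by energy (nonnegative terms, so grouping is harmless). *)
Definition Zcan (a : R) (N : nat) : R := Series (Z_shell a N).

Definition mean_n0 (a : R) (N : nat) : R := Series (n0_shell a N) / Zcan a N.

(* Adding a particle to the ground level, or
   moving every particle of a configuration with empty ground level one level
   down, shows that the number C(N, M) of configurations of N particles with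
   energy M (the partitions of M into at most N parts) satisfies
   C(N+1, M) = C(N, M) + C(N+1, M-N-1), and that their total ground occupation
   S satisfies S(N+1, M) = S(N, M) + C(N, M).  With q_j = exp (- b j) the
   partition function Z_N and the unnormalised ground occupation Y_N hence obey
   Z_N = (1 - q_(N+1)) Z_(N+1) and Y_(N+1) = Y_N + Z_N, so that
   <n_0> = sum_(n<N) Z_n / Z_N  with  Z_n / Z_N = prod_(n<j<=N) (1 - q_j).
   Every term is at most 1, so <n_0> <= N; the invariant q_N Y_n <= (1 - q_N) Z_n
   gives <n_0> <= exp (b N); and the union bound Z_n / Z_N >= 1 - N q_(n+1)
   makes the terms with n + 1 >= K = 3 ln N / b almost 1, so
   <n_0> >= N - 1/N - K.  For b = a gamma_N, exp (b N) / N -> 0 when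
   N gamma_N / ln N -> 0, and K / N -> 0 when N gamma_N / ln N -> oo. *)

From Pilot Require Import Defs.
From Stdlib Require Import Reals Lra Lia.
From Coquelicot Require Import Coquelicot.
From mathcomp Require Import all_boot zify.
Set Implicit Arguments.
Unset Strict Implicit.
Unset Printing Implicit Defensive.
Open Scope nat_scope.

Definition occn {K M : nat} (c : occ K M) (j : nat) : nat :=
  if j < M.+1 then (c (inord j) : nat) else 0.

Definition occ_of (K M : nat) (f : nat -> nat) : occ K M :=
  [ffun j : 'I_M.+1 => inord (f j)].

Section OccupationNumbers.
Variables K M : nat.
Implicit Types (c d : occ K M) (f : nat -> nat).

Lemma occnE c (j : 'I_M.+1) : occn c j = c j.
Proof. by rewrite /occn ltn_ord inord_val. Qed.

Lemma occn_le c j : occn c j <= K.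
Proof. by rewrite /occn; case: ifP => // _; rewrite -ltnS. Qed.

Lemma occn_gt c j : M < j -> occn c j = 0.
Proof. by move=> h; rewrite /occn ltnNge h. Qed.

Lemma occn_of f j : j <= M -> f j <= K -> occn (occ_of K M f) j = f j.
Proof. by move=> hj hf; rewrite /occn ltnS hj ffunE !inordK. Qed.

Lemma occ_ext c d : (forall j, j <= M -> occn c j = occn d j) -> c = d.
Proof.
by move=> h; apply/ffunP => j; apply: val_inj; rewrite /= -!occnE h // -ltnS.
Qed.

Lemma sum_occn (F : nat -> nat -> nat) c n : M < n -> (forall j, F j 0 = 0) ->
  \sum_(j < M.+1) F j (c j) = \sum_(0 <= j < n) F j (occn c j).
Proof.
move=> hn hF0; rewrite (big_cat_nat _ (n := M.+1)) //= big_mkord.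
rewrite [X in _ = _ + X]big1_seq ?addn0.
  by apply: eq_bigr => j _; rewrite occnE.
by move=> j /andP [_]; rewrite mem_index_iota => /andP [hj _]; rewrite occn_gt.
Qed.

Lemma total_occn c : Defs.total c = \sum_(0 <= j < M.+1) occn c j.
Proof. by apply: (@sum_occn (fun _ x => x)). Qed.

Lemma energy_occn c : energy c = \sum_(0 <= j < M.+1) j * occn c j.
Proof. by apply: (@sum_occn (fun j x => j * x)) => // j; rewrite muln0. Qed.

Lemma occn0 c : occn c 0 = c ord0.
Proof. exact: (occnE c ord0). Qed.

End OccupationNumbers.

Lemma leq_term_sum (F : nat -> nat) n j : j < n -> F j <= \sum_(0 <= i < n) F i.
Proof. by move=> hj; rewrite big_mkord (bigD1 (Ordinal hj)) //= leq_addr. Qed.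

Lemma occn0_add_le_total K M (c : occ K M) j : 0 < j <= M ->
  occn c 0 + occn c j <= Defs.total c.
Proof.
move=> /andP [hj0 hjM]; rewrite total_occn big_ltn // big_add1 /= leq_add2l.
by case: j hj0 hjM => // j _ hjM; apply: (leq_term_sum (fun i => occn c i.+1)).
Qed.

Lemma energy_ground_empty K M (c : occ K M) : occn c 0 = 0 ->
  energy c = Defs.total c + \sum_(0 <= j < M.+1) j.-1 * occn c j.
Proof.
move=> h0; rewrite energy_occn total_occn -big_split /=.
by apply: eq_big_nat => -[|j] _ /=; rewrite ?h0 ?mulSn.
Qed.

Section AddGroundParticle.
Variables N M : nat.

Definition add_ground (c : occ N M) : occ N.+1 M :=
  occ_of N.+1 M (fun j => occn c j + (j == 0)).

Definition remove_ground (c : occ N.+1 M) : occ N M :=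
  occ_of N M (fun j => occn c j - (j == 0)).

Lemma occn_add_ground (c : occ N M) j : j <= M ->
  occn (add_ground c) j = occn c j + (j == 0).
Proof.
by move=> hj; rewrite occn_of //; have := occn_le c j; case: (j == 0) => /=; lia.
Qed.

Lemma add_ground_ord0 (c : occ N M) : add_ground c ord0 = (c ord0).+1 :> nat.
Proof. by rewrite -!occn0 occn_add_ground // addn1. Qed.

Lemma admissible_add_ground (c : occ N M) :
  admissible (add_ground c) = admissible c.
Proof.
have total_add : Defs.total (add_ground c) = (Defs.total c).+1.
  have delta : \sum_(0 <= j < M.+1) (j == 0 : nat) = 1.
    by rewrite big_ltn // big_nat_cond big1 // => -[|i].
  rewrite !total_occn (eq_big_nat _ _ (F2 := fun j => occn c j + (j == 0))).
    by rewrite big_split /= delta addn1.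
  by move=> j /andP [_ hj]; rewrite occn_add_ground.
have energy_add : energy (add_ground c) = energy c.
  rewrite !energy_occn; apply: eq_big_nat => -[|j] /andP [_ hj] //.
  by rewrite occn_add_ground // addn0.
by rewrite /admissible total_add energy_add eqSS.
Qed.

Lemma remove_groundK : cancel add_ground remove_ground.
Proof.
move=> c; apply: occ_ext => j hj.
by rewrite occn_of // occn_add_ground // addnK ?occn_le.
Qed.

Lemma add_groundK (c : occ N.+1 M) : admissible c -> 0 < c ord0 ->
  add_ground (remove_ground c) = c.
Proof.
move=> /andP [/eqP htot _]; rewrite -occn0 => hc0.
apply: occ_ext => j hj; rewrite occn_add_ground // occn_of //.
  by case: eqP => [->|_]; [rewrite subnK | rewrite subn0 addn0].
case: j hj => [|j] hj; first by have := occn_le c 0; lia.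
by have := occn0_add_le_total c (j := j.+1); rewrite htot; lia.
Qed.

Lemma sum_ground_occupied (F : nat -> nat) :
  \sum_(c : occ N.+1 M | admissible c && (0 < c ord0)) F (c ord0)
  = \sum_(c : occ N M | admissible c) F (c ord0).+1.
Proof.
rewrite (reindex_onto add_ground remove_ground) => [|c /andP []]; last first.
  exact: add_groundK.
apply: eq_big => [c|c _]; last by rewrite add_ground_ord0.
by rewrite admissible_add_ground add_ground_ord0 remove_groundK eqxx !andbT.
Qed.

End AddGroundParticle.

Section ShiftLevels.
Variables K L M : nat.
Hypotheses (K_gt0 : 0 < K) (LKM : L + K = M).

Definition shift_up (c : occ K L) : occ K M :=
  occ_of K M (fun j => if j is j'.+1 then occn c j' else 0).

Definition shift_down (c : occ K M) : occ K L := occ_of K L (fun j => occn c j.+1).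

Let LltM : L < M. Proof. by rewrite -LKM -addn1 leq_add2l. Qed.

Lemma occn_shift_up (c : occ K L) j : j <= M ->
  occn (shift_up c) j = if j is j'.+1 then occn c j' else 0.
Proof. by move=> hj; rewrite occn_of //; case: j {hj} => // j; apply: occn_le. Qed.

Lemma shift_up_ord0 (c : occ K L) : shift_up c ord0 = 0 :> nat.
Proof. by rewrite -occn0 occn_shift_up. Qed.

Lemma admissible_shift_up (c : occ K L) : admissible (shift_up c) = admissible c.
Proof.
have shifted_sum (F : nat -> nat -> nat) : (forall j, F j 0 = 0) ->
    \sum_(0 <= j < M.+1) F j (occn (shift_up c) j)
    = \sum_(0 <= j < M) F j.+1 (occn c j).
  move=> hF0; rewrite big_nat_recl // occn_shift_up // hF0 add0n.
  by apply: eq_big_nat => j /andP [_ hj]; rewrite occn_shift_up.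
have total_up : Defs.total (shift_up c) = Defs.total c.
  rewrite total_occn (shifted_sum (fun _ x => x)) //.
  by rewrite -(sum_occn (F := fun _ x => x) _ LltM).
have energy_up : energy (shift_up c) = energy c + Defs.total c.
  rewrite energy_occn (shifted_sum (fun j x => j * x)) => [|j]; last by rewrite muln0.
  rewrite (eq_bigr (fun j => j * occn c j + occn c j)) => [|j _]; last first.
    by rewrite mulSn addnC.
  rewrite big_split /= -(sum_occn (F := fun j x => j * x) _ LltM) => [|j].
    by rewrite -(sum_occn (F := fun _ x => x) _ LltM).
  by rewrite muln0.
rewrite /admissible total_up energy_up -LKM.
by case: (Defs.total c =P K) => [->|] //=; rewrite eqn_add2r.
Qed.

Lemma shift_upK : cancel shift_up shift_down.
Proof.
move=> c; apply: occ_ext => j hj.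
by rewrite occn_of ?occn_le // occn_shift_up //; apply: leq_trans LltM.
Qed.

Lemma shift_downK (c : occ K M) : admissible c -> c ord0 = 0 :> nat ->
  shift_up (shift_down c) = c.
Proof.
move=> /andP [/eqP htot /eqP hen]; rewrite -occn0 => hc0.
apply: occ_ext => -[|j] hj; rewrite occn_shift_up //.
case: (leqP j L) => hjL; first by rewrite occn_of ?occn_le.
rewrite occn_gt //; apply/esym/eqP; rewrite -leqn0.
have hsum : \sum_(0 <= i < M.+1) i.-1 * occn c i = L.
  by have := energy_ground_empty hc0; rewrite htot hen; lia.
have := leq_term_sum (fun i => i.-1 * occn c i) (hj : j.+1 < M.+1).
rewrite hsum /=; case: (occn c j.+1) => // x; nia.
Qed.

End ShiftLevels.

Definition nconf (K M : nat) : nat := \sum_(c : occ K M | admissible c) 1.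

Definition n0sum (K M : nat) : nat := \sum_(c : occ K M | admissible c) (c ord0 : nat).

Lemma energy_ge_total K M (c : occ K M) : admissible c -> c ord0 = 0 :> nat -> K <= M.
Proof.
move=> /andP [/eqP htot /eqP hen]; rewrite -occn0 => hc0.
by have := energy_ground_empty hc0; rewrite htot hen => ->; apply: leq_addr.
Qed.

Lemma count_ground_empty N M :
  \sum_(c : occ N.+1 M | admissible c && ~~ (0 < c ord0)) 1
  = if N.+1 <= M then nconf N.+1 (M - N.+1) else 0.
Proof.
case: ifP => hNM; last first.
  rewrite big_pred0 // => c; apply/negbTE/andP => -[hc].
  by rewrite -eqn0Ngt => /eqP /(energy_ge_total hc); rewrite hNM.
have LKM : M - N.+1 + N.+1 = M by rewrite subnK.
rewrite (reindex_onto (@shift_up _ _ M) (@shift_down _ (M - N.+1) _)); last first.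
  by move=> c /andP [hc]; rewrite -eqn0Ngt => /eqP; apply: shift_downK.
apply: eq_bigl => c.
by rewrite admissible_shift_up // shift_up_ord0 shift_upK // eqxx !andbT.
Qed.

Lemma nconfS N M :
  nconf N.+1 M = nconf N M + (if N.+1 <= M then nconf N.+1 (M - N.+1) else 0).
Proof.
rewrite /nconf (bigID (fun c : occ N.+1 M => 0 < c ord0)) /=.
by rewrite count_ground_empty (sum_ground_occupied N M (fun _ => 1)).
Qed.

Lemma n0sumS N M : n0sum N.+1 M = n0sum N M + nconf N M.
Proof.
rewrite /n0sum (bigID (fun c : occ N.+1 M => 0 < c ord0)) /=.
rewrite (sum_ground_occupied N M id) [X in _ + X]big1; last first.
  by move=> c /andP [_]; rewrite -eqn0Ngt => /eqP.
rewrite addn0 /nconf -big_split.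
by apply: eq_bigr => c _; rewrite /= addn1.
Qed.

Lemma nconf0 M : nconf 0 M = (M == 0).
Proof.
have adm0 (c : occ 0 M) : admissible c = (M == 0).
  have c0 j : occn c j = 0 by apply/eqP; rewrite -leqn0 occn_le.
  rewrite /admissible total_occn energy_occn.
  by rewrite !big1 // => j _; rewrite c0 ?muln0.
rewrite /nconf (eq_bigl _ _ adm0); case: eqP => _; last by rewrite big_pred0.
by rewrite sum1_card card_ffun !card_ord exp1n.
Qed.

Lemma n0sum0 M : n0sum 0 M = 0.
Proof. by rewrite /n0sum big1 // => c _; case: (c ord0) => -[]. Qed.

Open Scope R_scope.

Lemma exp_le_exp x y : x <= y -> exp x <= exp y.
Proof.
by case/Rle_lt_or_eq_dec => [/exp_increasing/Rlt_le | ->]; [| apply: Rle_refl].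
Qed.

Lemma sum_n_le_nonneg (a : nat -> R) m n : (forall k, 0 <= a k) -> (m <= n)%N ->
  sum_n a m <= sum_n a n.
Proof.
move=> ha /leP; elim => [|j _ IH]; first exact: Rle_refl.
by rewrite sum_Sn /plus /=; have := ha j.+1; lra.
Qed.

Lemma sum_n_ge0 (a : nat -> R) n : (forall k, 0 <= a k) -> 0 <= sum_n a n.
Proof.
move=> ha; elim: n => [|n IH]; first by rewrite sum_O.
by rewrite sum_Sn /plus /=; have := ha n.+1; lra.
Qed.

Lemma sum_n_le_Series (a : nat -> R) n : (forall k, 0 <= a k) -> ex_series a ->
  sum_n a n <= Series a.
Proof.
move=> ha /Series_correct hlim; apply: (is_lim_seq_incr_compare _ _ hlim) => k.
by apply: sum_n_le_nonneg.
Qed.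

Lemma ex_series_nonneg_bounded (a : nat -> R) B : (forall k, 0 <= a k) ->
  (forall n, sum_n a n <= B) -> ex_series a.
Proof.
move=> ha hB; have [l hl] : ex_finite_lim_seq (sum_n a).
  by apply: (ex_finite_lim_seq_incr _ B) => // n; apply: sum_n_le_nonneg.
by exists l.
Qed.

Definition shiftr (k : nat) (u : nat -> R) (M : nat) : R :=
  if (k <= M)%N then u (M - k)%N else 0.

Lemma sum_n_shiftr k u L :
  sum_n (shiftr k u) L = if (k <= L)%N then sum_n u (L - k) else 0.
Proof.
elim: L => [|L IH]; first by rewrite sum_O /shiftr; case: ifP => // _; rewrite sum_O.
rewrite sum_Sn IH /shiftr /plus /=; case: (ltngtP k L.+1) => [hk|hk|->].
- by rewrite (hk : (k <= L)%N) (subSn (hk : (k <= L)%N)) sum_Sn.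
- by rewrite leqNgt (ltnW hk) /= Rplus_0_l.
- by rewrite ltnn subnn sum_O Rplus_0_l.
Qed.

Section ShiftFixpoint.
Variables (u v : nat -> R) (c : R) (k : nat).
Hypotheses (c_ge0 : 0 <= c) (c_lt1 : c < 1).
Hypotheses (u_ge0 : forall n, 0 <= u n) (v_ge0 : forall n, 0 <= v n).
Hypotheses (ex_u : ex_series u) (v_eq : forall n, v n = u n + c * shiftr k v n).

Lemma ex_series_shiftr_fix : ex_series v.
Proof.
apply: (ex_series_nonneg_bounded (B := Series u / (1 - c))) => // L.
have sum_v : sum_n v L = sum_n u L + c * sum_n (shiftr k v) L.
  by rewrite (sum_n_ext _ _ L v_eq) sum_n_plus sum_n_scal_l.
have shift_le : sum_n (shiftr k v) L <= sum_n v L.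
  rewrite sum_n_shiftr; case: ifP => _; last exact: sum_n_ge0.
  by apply: sum_n_le_nonneg => //; apply: leq_subr.
have hu := sum_n_le_Series L u_ge0 ex_u.
apply: (Rmult_le_reg_r (1 - c)); first lra.
rewrite /Rdiv Rmult_assoc Rinv_l; nra.
Qed.

Lemma Series_shiftr_fix : Series u = (1 - c) * Series v.
Proof.
have ex_cv : ex_series (fun n => c * shiftr k v n).
  apply: (ex_series_ext (fun n => v n - u n)).
    by move=> n; rewrite v_eq; lra.
  by apply: ex_series_minus => //; apply: ex_series_shiftr_fix.
have split_v : Series v = Series u + Series (fun n => c * shiftr k v n).
  by rewrite -Series_plus //; apply: Series_ext.
have shifted : Series (fun n => c * shiftr k v n) = c * Series v.
  rewrite (Series_incr_n_aux _ k); last first.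
    by move=> n /ltP hn; rewrite /shiftr leqNgt hn /= Rmult_0_r.
  rewrite Series_scal_l; congr (c * _); apply: Series_ext => n.
  by rewrite /shiftr leq_addr addKn.
rewrite shifted in split_v; lra.
Qed.

End ShiftFixpoint.

Definition boltz (b : R) (j : nat) : R := exp (- (b * INR j)).

Lemma boltz_gt0 b j : 0 < boltz b j.
Proof. exact: exp_pos. Qed.

Lemma boltz_ge0 b j : 0 <= boltz b j.
Proof. exact/Rlt_le/boltz_gt0. Qed.

Lemma boltz0 b : boltz b 0 = 1.
Proof. by rewrite /boltz Rmult_0_r Ropp_0 exp_0. Qed.

Lemma boltz_le b i j : 0 <= b -> (i <= j)%N -> boltz b j <= boltz b i.
Proof. by move=> hb /leP /le_INR hij; apply: exp_le_exp; nra. Qed.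

Lemma boltz_lt1 b j : 0 < b -> (0 < j)%N -> boltz b j < 1.
Proof.
move=> hb /ltP /lt_0_INR hj; rewrite -exp_0; apply: exp_increasing; nra.
Qed.

Lemma boltzD b i j : boltz b (i + j) = boltz b i * boltz b j.
Proof. by rewrite /boltz -exp_plus plus_INR; congr exp; ring. Qed.

Lemma big_Rplus_INR (I : finType) (P : pred I) (f : I -> nat) (x : R) :
  \big[Rplus/0]_(i | P i) (INR (f i) * x) = INR (\sum_(i | P i) f i)%N * x.
Proof.
apply: (big_rec2 (fun y n => y = INR n * x)) => [|i y n _ ->].
  by rewrite /= Rmult_0_l.
by rewrite plus_INR; ring.
Qed.

Lemma Z_shellE b N M : Z_shell b N M = INR (nconf N M) * boltz b M.
Proof.
rewrite -big_Rplus_INR; apply: eq_bigr => c /andP [_ /eqP hen].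
by rewrite /weight hen /boltz /=; ring.
Qed.

Lemma n0_shellE b N M : n0_shell b N M = INR (n0sum N M) * boltz b M.
Proof.
rewrite -big_Rplus_INR; apply: eq_bigr => c /andP [_ /eqP hen].
by rewrite /weight hen.
Qed.

Lemma Z_shell_ge0 b N M : 0 <= Z_shell b N M.
Proof.
by rewrite Z_shellE; apply: Rmult_le_pos; [apply: pos_INR | apply: boltz_ge0].
Qed.

Lemma Z_shellS b N M :
  Z_shell b N.+1 M = Z_shell b N M + boltz b N.+1 * shiftr N.+1 (Z_shell b N.+1) M.
Proof.
rewrite /shiftr !Z_shellE nconfS plus_INR; case: ifP => hNM; last by rewrite /=; ring.
by rewrite -[in boltz b M](subnKC hNM) boltzD; ring.
Qed.

Lemma n0_shellS b N M : n0_shell b N.+1 M = n0_shell b N M + Z_shell b N M.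
Proof. by rewrite !n0_shellE Z_shellE n0sumS plus_INR; ring. Qed.

Lemma Z_shell0 b M : Z_shell b 0 M = if M == 0%N then 1 else 0.
Proof. by rewrite Z_shellE nconf0; case: eqP => [->|_] /=; rewrite ?boltz0; ring. Qed.

Lemma n0_shell0 b M : n0_shell b 0 M = 0.
Proof. by rewrite n0_shellE n0sum0 /=; ring. Qed.

Lemma is_series_Z_shell0 b : is_series (Z_shell b 0) 1.
Proof.
suff : is_lim_seq (sum_n (Z_shell b 0)) 1 by [].
apply: (is_lim_seq_ext (fun _ => 1)); last exact: is_lim_seq_const.
elim=> [|L IH]; first by rewrite sum_O Z_shell0.
by rewrite sum_Sn -IH Z_shell0 /plus /=; ring.
Qed.

Lemma is_series_n0_shell0 b : is_series (n0_shell b 0) 0.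
Proof.
suff : is_lim_seq (sum_n (n0_shell b 0)) 0 by [].
apply: (is_lim_seq_ext (fun _ => 0)); last exact: is_lim_seq_const.
move=> L; rewrite (sum_n_ext _ (fun _ => 0)) => [|M]; last by rewrite n0_shell0.
by rewrite sum_n_const Rmult_0_r.
Qed.

Definition n0can (b : R) (N : nat) : R := Series (n0_shell b N).

Lemma Zcan0 b : Zcan b 0 = 1.
Proof. exact: is_series_unique (is_series_Z_shell0 b). Qed.

Lemma n0can0 b : n0can b 0 = 0.
Proof. exact: is_series_unique (is_series_n0_shell0 b). Qed.

Section CanonicalRecursion.
Variable b : R.
Hypothesis b_pos : 0 < b.

Lemma ex_series_Z_shell N : ex_series (Z_shell b N).
Proof.
elim: N => [|N IH]; first by exists 1; apply: is_series_Z_shell0.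
exact: (ex_series_shiftr_fix (boltz_ge0 b N.+1) (boltz_lt1 b_pos (ltn0Sn N))
          (Z_shell_ge0 b N) (Z_shell_ge0 b N.+1) IH (Z_shellS b N)).
Qed.

Lemma ZcanS N : Zcan b N = (1 - boltz b N.+1) * Zcan b N.+1.
Proof.
exact: (Series_shiftr_fix (boltz_ge0 b N.+1) (boltz_lt1 b_pos (ltn0Sn N))
          (Z_shell_ge0 b N) (Z_shell_ge0 b N.+1) (ex_series_Z_shell N) (Z_shellS b N)).
Qed.

Lemma ex_series_n0_shell N : ex_series (n0_shell b N).
Proof.
elim: N => [|N IH]; first by exists 0; apply: is_series_n0_shell0.
apply: ex_series_ext (ex_series_plus _ _ IH (ex_series_Z_shell N)) => M.
by rewrite n0_shellS.
Qed.

Lemma n0canS N : n0can b N.+1 = n0can b N + Zcan b N.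
Proof.
rewrite /n0can /Zcan -Series_plus.
- by apply: Series_ext => M; rewrite n0_shellS.
- exact: ex_series_n0_shell.
- exact: ex_series_Z_shell.
Qed.

Lemma Zcan_gt0 n : 0 < Zcan b n.
Proof.
elim: n => [|n IH]; first by rewrite Zcan0; lra.
have := ZcanS n; have := boltz_lt1 b_pos (ltn0Sn n); have := boltz_gt0 b n.+1.
nra.
Qed.

Lemma Zcan_le m n : (m <= n)%N -> Zcan b m <= Zcan b n.
Proof.
move=> /leP; elim => [|k _ IH]; first exact: Rle_refl.
have := ZcanS k; have := Zcan_gt0 k.+1; have := boltz_gt0 b k.+1; nra.
Qed.

Lemma n0can_ge0 n : 0 <= n0can b n.
Proof.
elim: n => [|n IH]; first by rewrite n0can0; apply: Rle_refl.
by rewrite n0canS; have := Zcan_gt0 n; lra.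
Qed.

Lemma n0can_le N : n0can b N <= INR N * Zcan b N.
Proof.
suff : forall n, (n <= N)%N -> n0can b n <= INR n * Zcan b N by apply.
elim => [|n IH] hn; first by rewrite n0can0 /= Rmult_0_l; apply: Rle_refl.
rewrite n0canS S_INR; have := IH (ltnW hn); have := Zcan_le (ltnW hn); lra.
Qed.

Lemma n0can_le_exp N : n0can b N <= Zcan b N * exp (b * INR N).
Proof.
set q := boltz b N.
have q_gt0 : 0 < q by apply: boltz_gt0.
have q_le1 : q <= 1 by rewrite -(boltz0 b); apply: boltz_le => //; lra.
have invariant n : (n <= N)%N -> n0can b n * q <= Zcan b n * (1 - q).
  elim: n => [|n IH] hn; first by rewrite n0can0 Zcan0; lra.
  have q_le : q <= boltz b n.+1 by apply: boltz_le => //; lra.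
  rewrite n0canS; have := IH (ltnW hn); have := ZcanS n.
  have := Zcan_gt0 n.+1; nra.
have qe : q * exp (b * INR N) = 1 by rewrite /q /boltz -exp_plus Rplus_opp_l exp_0.
have e_gt0 : 0 < exp (b * INR N) by apply: exp_pos.
have := invariant N (leqnn N); have := Zcan_gt0 N.
nra.
Qed.

Lemma Zcan_shift_ge m d : (1 - INR d * boltz b m.+1) * Zcan b (m + d) <= Zcan b m.
Proof.
elim: d => [|d IH]; first by rewrite addn0 /=; lra.
move: IH; rewrite (ZcanS (m + d)) addnS S_INR.
have f_le_e : boltz b (m + d).+1 <= boltz b m.+1 by apply: boltz_le; [lra | lia].
set e := boltz b m.+1 in f_le_e *; set f := boltz b (m + d).+1 in f_le_e *.
have := Zcan_gt0 (m + d).+1; set z := Zcan b (m + d).+1 => z_gt0.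
have def_ge0 : 0 <= INR d * e * f * z.
  have := pos_INR d; have := boltz_ge0 b m.+1; have := boltz_ge0 b (m + d).+1.
  by move=> *; repeat apply: Rmult_le_pos => //; lra.
nra.
Qed.

Lemma n0can_ge N K : 0 <= K ->
  Zcan b N * (INR N - INR N * INR N * exp (- (b * K)) - K) <= n0can b N.
Proof.
move=> K_ge0; set eps := exp (- (b * K)).
have eps_gt0 : 0 < eps by apply: exp_pos.
have ZN_gt0 := Zcan_gt0 N; have N_ge0 := pos_INR N.
suff : forall n, (n <= N)%N ->
    Zcan b N * (INR n - INR n * INR N * eps - K) <= n0can b n by apply.
elim => [|n IH] hn; first by rewrite n0can0 /=; nra.
have n_ge0 := pos_INR n.
rewrite n0canS S_INR.
case: (Rlt_le_dec (INR n + 1) K) => hnK.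
  have := n0can_ge0 n; have := Zcan_gt0 n.
  have : 0 <= (INR n + 1) * INR N * eps by apply: Rmult_le_pos; nra.
  nra.
have := Zcan_shift_ge n (N - n); rewrite subnKC ?(ltnW hn) // => shift_ge.
have boltz_le_eps : boltz b n.+1 <= eps by apply: exp_le_exp; rewrite S_INR; nra.
have : INR (N - n) * boltz b n.+1 <= INR N * eps.
  apply: Rmult_le_compat; [apply: pos_INR | exact: boltz_ge0 | | by []].
  exact/le_INR/leP/leq_subr.
have := IH (ltnW hn); nra.
Qed.

End CanonicalRecursion.

Section GroundFraction.
Variables (b : R) (N : nat).
Hypotheses (b_pos : 0 < b) (N_gt0 : (0 < N)%N).

Let INR_N_ge1 : 1 <= INR N.
Proof. by apply: (le_INR 1); apply/leP. Qed.

Let ZN_gt0 : 0 < Zcan b N.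
Proof. exact: Zcan_gt0. Qed.

Lemma mean_n0_frac_ge0 : 0 <= mean_n0 b N / INR N.
Proof. by repeat apply: Rdiv_le_0_compat; [apply: n0can_ge0 | | lra]. Qed.

Lemma mean_n0_frac_le1 : mean_n0 b N / INR N <= 1.
Proof.
apply/Rle_div_l; first lra.
by rewrite Rmult_1_l; apply/Rle_div_l => //; apply: n0can_le.
Qed.

Lemma mean_n0_frac_le_exp : mean_n0 b N / INR N <= exp (b * INR N - ln (INR N)).
Proof.
rewrite /Rminus exp_plus exp_Ropp exp_ln; last lra.
apply: Rmult_le_compat_r; first by apply/Rlt_le/Rinv_0_lt_compat; lra.
by apply/Rle_div_l => //; rewrite Rmult_comm; apply: n0can_le_exp.
Qed.

Lemma mean_n0_frac_ge :
  1 - / INR N - 3 * ln (INR N) / (b * INR N) <= mean_n0 b N / INR N.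
Proof.
set K := 3 * ln (INR N) / b.
have ln_ge0 : 0 <= ln (INR N) by rewrite -ln_1; apply: ln_le; lra.
have K_ge0 : 0 <= K by apply: Rdiv_le_0_compat; lra.
(* K = 3 ln N / b is chosen so that N^2 exp (- b K) = 1 / N. *)
have tail : INR N * INR N * exp (- (b * K)) = / INR N.
  rewrite (_ : b * K = INR 3 * ln (INR N)); last by rewrite /K /=; field; lra.
  by rewrite -ln_pow ?exp_Ropp ?exp_ln; [rewrite /=; field | apply: pow_lt | ]; lra.
have mean_ge : INR N - / INR N - K <= mean_n0 b N.
  by apply/Rle_div_r => //; rewrite Rmult_comm -tail; apply: n0can_ge.
have inv_gt0 : 0 < / INR N by apply: Rinv_0_lt_compat; lra.
have inv_le1 : / INR N <= 1 by rewrite -Rinv_1; apply: Rinv_le_contravar; lra.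
apply: Rle_trans (_ : (INR N - / INR N - K) / INR N <= _).
  have -> : (INR N - / INR N - K) / INR N
          = 1 - / INR N * / INR N - 3 * ln (INR N) / (b * INR N).
    by rewrite /K; field; lra.
  nra.
by apply: Rmult_le_compat_r => //; apply: Rlt_le.
Qed.

End GroundFraction.

Lemma ln_INR_gt0 N : (2 <= N)%N -> 0 < ln (INR N).
Proof.
move=> /leP /(le_INR 2) hN; rewrite -ln_1; apply: ln_increasing; rewrite /= in hN; lra.
Qed.

Lemma is_lim_seq_ln_INR : is_lim_seq (fun N => ln (INR N)) p_infty.
Proof.
apply: (is_lim_comp_seq _ _ p_infty p_infty is_lim_ln_p); last exact: is_lim_seq_INR.
by exists 0%N.
Qed.

Section Condensation.
Variables (gamma : nat -> R) (a : R).
Hypotheses (gamma_pos : forall N, 0 < gamma N) (a_pos : 0 < a).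

Let x N := INR N * gamma N / ln (INR N).

Lemma no_condensation : is_lim_seq x 0 ->
  is_lim_seq (fun N => mean_n0 (a * gamma N) N / INR N) 0.
Proof.
move=> x_lim.
apply: (is_lim_seq_le_le_loc (fun _ => 0) _
          (fun N => exp (ln (INR N) * (a * x N - 1)))).
- exists 2%N => N /leP hN.
  have b_pos : 0 < a * gamma N by apply: Rmult_lt_0_compat.
  have N_gt0 : (0 < N)%N by apply: ltnW.
  have ln_gt0 := ln_INR_gt0 hN.
  have -> : ln (INR N) * (a * x N - 1) = a * gamma N * INR N - ln (INR N).
    by rewrite /x; field; lra.
  by split; [exact: mean_n0_frac_ge0 | exact: mean_n0_frac_le_exp].
- exact: is_lim_seq_const.
- apply: (is_lim_comp_seq _ _ m_infty 0 is_lim_exp_m); first by exists 0%N.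
  apply: (is_lim_seq_mult _ _ p_infty (a * 0 - 1)); first exact: is_lim_seq_ln_INR.
    by apply: is_lim_seq_minus' (is_lim_seq_const 1); apply: is_lim_seq_scal_l x_lim.
  by apply: is_Rbar_mult_p_infty_neg; rewrite /=; lra.
Qed.

Lemma full_condensation : is_lim_seq x p_infty ->
  is_lim_seq (fun N => mean_n0 (a * gamma N) N / INR N) 1.
Proof.
move=> x_lim.
apply: (is_lim_seq_le_le_loc (fun N => 1 - / INR N - 3 / a * / x N) _ (fun _ => 1)).
- exists 2%N => N /leP hN.
  have b_pos : 0 < a * gamma N by apply: Rmult_lt_0_compat.
  have N_gt0 : (0 < N)%N by apply: ltnW.
  have ln_gt0 := ln_INR_gt0 hN.
  have INR_N_gt0 : 0 < INR N by apply/lt_0_INR/ltP.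
  have -> : 3 / a * / x N = 3 * ln (INR N) / (a * gamma N * INR N).
    by rewrite /x; field; have := gamma_pos N; repeat split; lra.
  by split; [exact: mean_n0_frac_ge | exact: mean_n0_frac_le1].
- have inv_N : is_lim_seq (fun N => / INR N) 0.
    exact: is_lim_seq_inv is_lim_seq_INR _.
  have inv_x : is_lim_seq (fun N => 3 / a * / x N) 0.
    have := is_lim_seq_scal_l _ (3 / a) _ (is_lim_seq_inv _ _ x_lim _).
    by rewrite /= Rmult_0_r; apply.
  have := is_lim_seq_minus' _ _ _ _
            (is_lim_seq_minus' _ _ _ _ (is_lim_seq_const 1) inv_N) inv_x.
  by rewrite !Rminus_0_r.
- exact: is_lim_seq_const.
Qed.

End Condensation.

Theorem corollary1 (gamma : nat -> R)
  (gamma_pos : forall N : nat, 0 < gamma N)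
  (gamma_to0 : is_lim_seq gamma 0) :
  (is_lim_seq (fun N : nat => INR N * gamma N / ln (INR N)) 0 ->
     forall a : R, 0 < a ->
       is_lim_seq (fun N : nat => mean_n0 (a * gamma N) N / INR N) 0)
  /\
  (is_lim_seq (fun N : nat => INR N * gamma N / ln (INR N)) p_infty ->
     forall a : R, 0 < a ->
       is_lim_seq (fun N : nat => mean_n0 (a * gamma N) N / INR N) 1).
Proof.
by split=> x_lim a a_pos; [apply: no_condensation | apply: full_condensation].
Qed.
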